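(* Fix an integer $\Delta\geq 3$. There is a function $\varepsilon:\mathbb{N}\to\mathbb{R}$, depending only on $n$ (for the fixed $\Delta$), with $\varepsilon(n)\to 0$ as $n\to\infty$, such that for every integer $n\geq 3$, every graph $G$ of order $n$ and maximum degree at most $\Delta$ satisfies $$Mo(G)\leq \frac{\Delta}{2}n^2-(2-\varepsilon(n))\frac{\Delta-2}{(\Delta-1)^2}\,n\log_{(\Delta-1)}\left(\log_{(\Delta-1)}(n)\right).$$
   Context: All graphs are finite and simple. For a graph $G$ and an edge $uv$ of $G$, $n_G(u,v)$ denotes the number of vertices of $G$ whose distance in $G$ to $u$ is smaller than their distance to $v$ (vertices in other components have infinite distance to both and are not counted). The Mostar index of $G$ is $Mo(G)=\sum_{uv\in E(G)}|n_G(u,v)-n_G(v,u)|$. The $o(1)$ term of the paper is written here as $\varepsilon(n)$. *)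

From mathcomp Require Import all_boot.
From Stdlib Require Import Reals.
Set Implicit Arguments. Unset Strict Implicit. Unset Printing Implicit Defensive.

Section Graphs.
Variable T : finType.
Variable e : rel T.

Definition simple_graph : Prop := symmetric e /\ irreflexive e.

Definition deg (v : T) : nat := #|[set w | e v w]|.

Definition maxdeg_le (D : nat) : Prop := forall v, deg v <= D.

Fixpoint walkn (k : nat) (x y : T) : bool :=
  match k with
  | 0 => x == y
  | k'.+1 => [exists z, e x z && walkn k' z y]
  end.

(* Graph distance; None = infinite (different components).  A shortest walk
   is a path, so it has length < #|T|. *)
Definition dist (x y : T) : option nat :=
  let s := iota 0 #|T| in
  if has (fun k => walkn k x y) s then Some (find (fun k => walkn k x y) s)
  else None.

Definition closer (w u v : T) : bool :=
  match dist w u, dist w v with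
  | Some a, Some b => a < b
  | Some _, None => true
  | None, _ => false
  end.

Definition nG (u v : T) : nat := #|[set w | closer w u v]|.

(* absolute difference in nat written as (a - b) + (b - a) (truncated subtraction). *)
(* Mostar index: sum over (unordered) edges of |n(u,v) - n(v,u)|.
   The sum over ordered adjacent pairs counts each edge exactly twice. *)
Definition mostar : nat :=
  (\sum_(u : T) \sum_(v : T | e u v) ((nG u v - nG v u) + (nG v u - nG u v))) %/ 2.

End Graphs.

Definition logb (b x : R) : R := (ln x / ln b)%R.

(* For an edge uv let a = n(u,v), b = n(v,u) and c the number of vertices tied between u and v.
   As a + b + c = n, we get n |a - b| <= n^2 - n c - 2 a b. Summed over the edges, the products
   a b dominate the total distance between connected pairs (a geodesic from y to z crosses d(y,z)
   edges with y closer to one end and z closer to the other), and the ties dominate the degrees of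
   the vertices lying outside each component. Fewer than r D^r vertices are within distance r of
   a vertex y, so if 2 r (1 + D^r) <= n then either r vertices are unreachable from y or half of
   the vertices are at distance at least r from y. Altogether 2 Mo + n r <= D n^2, and r can be
   taken at least log_(D-1) log_(D-1) n; as 4 (D - 2) <= (D - 1)^2, the saving n r / 2 exceeds
   2 (D - 2) / (D - 1)^2 n log_(D-1) log_(D-1) n. *)

From mathcomp Require Import all_boot zify.
From Stdlib Require Import Rbase Rfunctions Rseries Rpower Lra.
(* The Reals modules rebind [^] on nat to Nat.pow; restore ssrnat's expn. *)
Import ssrnat.
Set Implicit Arguments. Unset Strict Implicit. Unset Printing Implicit Defensive.

Section Walks.
Variables (T : finType) (e : rel T).

Lemma walkn1 x y : walkn e 1 x y = e x y.
Proof.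
by apply/existsP/idP => [[z /andP[exz /eqP <-]] // | exy]; exists y; rewrite exy /=.
Qed.

Lemma walkn_cat a b x y z : walkn e a x y -> walkn e b y z -> walkn e (a + b) x z.
Proof.
elim: a x => [|a IHa] x /=; first by move=> /eqP ->.
by move=> /existsP[w /andP[exw wy]] yz; apply/existsP; exists w; rewrite exw (IHa _ wy).
Qed.

Lemma walkn_split a b x z :
  walkn e (a + b) x z -> exists2 y, walkn e a x y & walkn e b y z.
Proof.
elim: a x => [|a IHa] x /=; first by exists x.
move=> /existsP[w /andP[exw /IHa[y wy yz]]].
by exists y => //; apply/existsP; exists w; rewrite exw.
Qed.

Lemma walknSr k x y : walkn e k.+1 x y = [exists z, walkn e k x z && e z y].
Proof.
apply/idP/existsP => [|[z /andP[xz zy]]].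
  by rewrite -addn1 => /walkn_split[z xz]; rewrite walkn1 => zy; exists z; rewrite xz.
by rewrite -addn1; apply: walkn_cat xz _; rewrite walkn1.
Qed.

Lemma walkn_connect k x y : walkn e k x y -> connect e x y.
Proof.
elim: k x => [|k IHk] x /=; first by move=> /eqP ->.
by move=> /existsP[z /andP[/connect1 xz /IHk]]; apply: connect_trans.
Qed.

Lemma path_walkn x p : path e x p -> walkn e (size p) x (last x p).
Proof.
elim: p x => [|y p IHp] x /=; first by rewrite eqxx.
by move=> /andP[xy /IHp yp]; apply/existsP; exists y; rewrite xy.
Qed.

(* Shortening a walk to a duplicate-free path brings its length below #|T|. *)
Lemma walkn_short j x y : walkn e j x y -> exists2 k, k < #|T| & walkn e k x y.
Proof.
move=> /walkn_connect/connectP[p xp ->]; case: (shortenP xp) => q xq uniq_xq _.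
exists (size q); last exact: path_walkn.
by rewrite -[_ < _]/(size (x :: q) <= #|T|) -(card_uniqP uniq_xq) max_card.
Qed.

Lemma dist_minP x y k :
  dist e x y = Some k -> walkn e k x y /\ forall j, walkn e j x y -> k <= j.
Proof.
rewrite /dist; case: ifP => // has_walk [<-].
have find_lt : find (fun k => walkn e k x y) (iota 0 #|T|) < #|T|.
  by rewrite -[X in _ < X](size_iota 0) -has_find.
split; first by have := nth_find 0 has_walk; rewrite nth_iota // add0n.
move=> j xy_j; rewrite leqNgt; apply/negP => j_lt.
by have := before_find 0 j_lt; rewrite nth_iota ?add0n ?xy_j // (ltn_trans j_lt).
Qed.

Lemma dist_walkn x y j : walkn e j x y -> exists2 k, dist e x y = Some k & k <= j.
Proof.
move=> xy_j; have [k k_lt xy_k] := walkn_short xy_j.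
have has_walk : has (fun k => walkn e k x y) (iota 0 #|T|).
  by apply/hasP; exists k; rewrite ?mem_iota.
set k0 := find (fun k => walkn e k x y) (iota 0 #|T|).
have dist_k0 : dist e x y = Some k0 by rewrite /dist has_walk.
by exists k0 => //; have [_] := dist_minP dist_k0; apply.
Qed.

Lemma dist_prefix a b k y u z : a + b = k -> dist e y z = Some k ->
  walkn e a y u -> walkn e b u z -> dist e y u = Some a.
Proof.
move=> <- /dist_minP[_ yz_min] yu uz; have [k' yu_k' k'_le] := dist_walkn yu.
have [yu' _] := dist_minP yu_k'; have := yz_min _ (walkn_cat yu' uz).
by rewrite yu_k' => ?; congr Some; lia.
Qed.

Lemma dist_None_adj y u v : dist e y u = None -> e v u -> dist e y v = None.
Proof.
move=> yu_none vu; case yv: (dist e y v) => [k|] //.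
have [yv_k _] := dist_minP yv; have := walkn_cat yv_k (_ : walkn e 1 v u).
by rewrite walkn1 => /(_ vu) /dist_walkn[k']; rewrite yu_none.
Qed.

Hypothesis e_sym : symmetric e.

Lemma walkn_sym k x y : walkn e k x y = walkn e k y x.
Proof.
elim: k x y => [|k IHk] x y; first by rewrite /= eq_sym.
rewrite walknSr /=; apply/existsP/existsP => [] [z /andP[h1 h2]];
  by exists z; rewrite e_sym IHk ?h1 ?h2 // -IHk.
Qed.

Lemma dist_sym x y : dist e x y = dist e y x.
Proof.
have walk_sym : (fun k => walkn e k x y) =1 (fun k => walkn e k y x).
  by move=> k; apply: walkn_sym.
by rewrite /dist (eq_has walk_sym) (eq_find walk_sym).
Qed.

Lemma geodesic_edge y z k i : dist e y z = Some k -> i < k ->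
  exists u v, [/\ e u v, dist e y u = Some i, dist e y v = Some i.+1,
                  dist e z v = Some (k - i.+1) & dist e z u = Some (k - i)].
Proof.
move=> yz i_lt; have [yz_k _] := dist_minP yz; have zy := yz; rewrite dist_sym in zy.
have : walkn e (i + (1 + (k - i.+1))) y z.
  by have -> : i + (1 + (k - i.+1)) = k by lia.
move=> /walkn_split[u yu /walkn_split[v uv vz]]; rewrite walkn1 in uv.
have yv : walkn e (i + 1) y v by apply: walkn_cat yu _; rewrite walkn1.
have uz : walkn e (1 + (k - i.+1)) u z by apply: walkn_cat vz; rewrite walkn1.
have [zv vy] : walkn e (k - i.+1) z v /\ walkn e (i + 1) v y by split; rewrite walkn_sym.
have [zu uy] : walkn e (1 + (k - i.+1)) z u /\ walkn e i u y by split; rewrite walkn_sym.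
exists u, v; split => //.
- by apply: dist_prefix yz yu uz; lia.
- by rewrite -addn1; apply: dist_prefix yz yv vz; lia.
- by apply: dist_prefix zy zv vy; lia.
- by rewrite (_ : k - i = 1 + (k - i.+1)); [apply: dist_prefix zy zu uy|]; lia.
Qed.

End Walks.

Lemma card_set_sum (I : finType) (P : pred I) : #|[set w | P w]| = \sum_w P w.
Proof. by rewrite -sum1dep_card big_mkcond; apply: eq_bigr => w _; case: (P w). Qed.

Lemma card_exists_le (I J : finType) (P : pred I) (Q : I -> pred J) :
  #|[set z | [exists w, P w && Q w z]]| <= \sum_(w | P w) #|[set z | Q w z]|.
Proof.
rewrite card_set_sum; under [X in _ <= X]eq_bigr => w _ do rewrite card_set_sum.
rewrite [X in _ <= X]exchange_big /=; apply: leq_sum => z _.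
by case: existsP => // -[w /andP[Pw Qwz]]; rewrite (bigD1 w) //= Qwz.
Qed.

Lemma absdiff_ties_bound a b c :
  let n := a + b + c in n * ((a - b) + (b - a)) + n * c + 2 * (a * b) <= n * n.
Proof. nia. Qed.

Section EdgeCounting.
Variables (T : finType) (e : rel T).

Definition ties u v := #|[set w | ~~ closer e w u v && ~~ closer e w v u]|.

Definition ncross y z :=
  #|[set p : T * T | [&& e p.1 p.2, closer e y p.1 p.2 & closer e z p.2 p.1]]|.

Definition distn y z := odflt 0 (dist e y z).

Definition unreachable y := [set u | dist e y u == None].

Lemma closer_asym w u v : closer e w u v -> closer e w v u = false.
Proof.
rewrite /closer; case: (dist e w u) => [a|]; case: (dist e w v) => [b|] //.
by move=> ab; rewrite ltnNge ltnW.
Qed.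

Lemma nG_ties_partition u v : nG e u v + nG e v u + ties u v = #|T|.
Proof.
rewrite /nG /ties !card_set_sum -!big_split -sum1_card; apply: eq_bigr => w _ /=.
by case uv: (closer e w u v); [rewrite (closer_asym uv) | case: (closer e w v u)].
Qed.

Lemma edge_bound u v :
  #|T| * ((nG e u v - nG e v u) + (nG e v u - nG e u v)) + #|T| * ties u v
    + 2 * (nG e u v * nG e v u) <= #|T| * #|T|.
Proof. by rewrite -(nG_ties_partition u v); apply: absdiff_ties_bound. Qed.

Lemma sum_edge_bound :
  #|T| * \sum_u \sum_(v | e u v) ((nG e u v - nG e v u) + (nG e v u - nG e u v))
  + #|T| * \sum_u \sum_(v | e u v) ties u v
  + 2 * \sum_u \sum_(v | e u v) nG e u v * nG e v u
  <= (\sum_u deg e u) * (#|T| * #|T|).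
Proof.
rewrite big_distrl !big_distrr -!big_split; apply: leq_sum => u _.
rewrite /deg -sum1dep_card big_distrl !big_distrr -!big_split /=.
by apply: leq_sum => v _; rewrite mul1n edge_bound.
Qed.

Lemma sum_nG_prod :
  \sum_u \sum_(v | e u v) nG e u v * nG e v u = \sum_y \sum_z ncross y z.
Proof.
have ncrossE y z : ncross y z =
    \sum_u \sum_(v | e u v) (closer e y u v * closer e z v u).
  rewrite /ncross card_set_sum; under [RHS]eq_bigr do rewrite big_mkcond.
  rewrite pair_bigA; apply: eq_bigr => -[u v] _ /=.
  by case: (e u v); case: closer; case: closer.
under eq_bigr do under eq_bigr do rewrite /nG !card_set_sum big_distrlr.
under eq_bigr do rewrite exchange_big; rewrite exchange_big.
under eq_bigr do under eq_bigr do rewrite exchange_big.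
by apply: eq_bigr => y _; rewrite exchange_big; apply: eq_bigr => z _; rewrite ncrossE.
Qed.

Hypothesis e_sym : symmetric e.

Lemma distn_le_ncross y z : distn y z <= ncross y z.
Proof.
rewrite /distn; case yz: (dist e y z) => [k|] //=.
have pick_edge (i : 'I_k) : exists p : T * T, [&& e p.1 p.2,
    dist e y p.1 == Some (i : nat), dist e y p.2 == Some i.+1,
    dist e z p.2 == Some (k - i.+1) & dist e z p.1 == Some (k - i)].
  have [u [v [uv yu yv zv zu]]] := geodesic_edge e_sym yz (ltn_ord i).
  by exists (u, v); rewrite /= uv yu yv zv zu !eqxx.
have [f fP] := fin_all_exists pick_edge.
have f_inj : injective f.
  move=> i j fij; have := fP i; rewrite fij => /and5P[_ /eqP yi _ _ _].
  by have := fP j => /and5P[_ /eqP + _ _ _]; rewrite yi => -[/val_inj].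
rewrite -[k]card_ord -cardsT -(card_imset _ f_inj); apply: subset_leq_card.
apply/subsetP => _ /imsetP[i _ ->]; have := fP i.
move=> /and5P[uv /eqP yu /eqP yv /eqP zv /eqP zu].
by rewrite inE uv /closer yu yv zv zu /=; have := ltn_ord i; lia.
Qed.

Lemma sum_unreachable_deg_le_ties :
  \sum_y \sum_(u in unreachable y) deg e u <= \sum_u \sum_(v | e u v) ties u v.
Proof.
have tiesE : \sum_u \sum_(v | e u v) ties u v =
    \sum_y \sum_u \sum_(v | e u v) (~~ closer e y u v && ~~ closer e y v u).
  under eq_bigr do under eq_bigr do rewrite /ties card_set_sum.
  by under eq_bigr do rewrite exchange_big; rewrite exchange_big.
rewrite tiesE; apply: leq_sum => y _.
rewrite [X in _ <= X](bigID (mem (unreachable y))) /=; apply: leq_trans (leq_addr _ _).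
apply: leq_sum => u; rewrite inE => /eqP yu; rewrite /deg -sum1dep_card.
apply: leq_sum => v uv; have vu : e v u by rewrite e_sym.
by rewrite /closer yu (dist_None_adj yu vu).
Qed.

End EdgeCounting.

Section BoundedDegree.
Variables (T : finType) (e : rel T) (D : nat).
Hypotheses (e_sym : symmetric e) (deg_le : maxdeg_le e D) (D_gt0 : 0 < D).

Lemma card_walkn_le j y : #|[set z | walkn e j y z]| <= D ^ j.
Proof.
elim: j y => [|j IHj] y.
  by rewrite expn0 -(cards1 y) subset_leq_card //; apply/subsetP => z; rewrite !inE eq_sym.
apply: leq_trans (card_exists_le _ _) _.
apply: (@leq_trans (\sum_(w | e y w) D ^ j)); first by apply: leq_sum => w _.
by rewrite sum_nat_cond_const expnS leq_mul2r (deg_le y) orbT.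
Qed.

Lemma card_near_le r y : #|[set z | [exists j : 'I_r, walkn e j y z]]| <= r * D ^ r.
Proof.
apply: leq_trans (card_exists_le predT (fun (j : 'I_r) z => walkn e j y z)) _.
apply: (@leq_trans (\sum_(j < r) D ^ r)); last by rewrite sum_nat_const card_ord.
by apply: leq_sum => j _; apply: leq_trans (card_walkn_le _ _) _; rewrite leq_pexp2l // ltnW.
Qed.

Lemma depth_bound r y : 2 * r * (1 + D ^ r) <= #|T| ->
  #|T| * r <= #|T| * #|unreachable e y| + 2 * \sum_z distn e y z.
Proof.
move=> r_small; set s0 := #|unreachable e y|.
set far := #|[set z | r <= distn e y z]|.
have cover : #|T| <= s0 + far + r * D ^ r.
  apply: leq_trans (leq_add (leqnn _) (card_near_le r y)).
  rewrite /s0 /far /unreachable !card_set_sum -!big_split -sum1_card.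
  apply: leq_sum => z _ /=; rewrite /distn; case yz: (dist e y z) => [k|] //=.
  case: (leqP r k) => //= k_lt; have [yz_k _] := dist_minP yz.
  suff -> : [exists j : 'I_r, walkn e j y z] by [].
  by apply/existsP; exists (Ordinal k_lt).
have far_dist : r * far <= \sum_z distn e y z.
  rewrite /far card_set_sum big_distrr; apply: leq_sum => z _ /=.
  by case: (leqP r (distn e y z)) => [|_]; rewrite ?muln1 ?muln0.
case: (leqP r s0) => [r_le | s0_lt].
  by apply: leq_trans (leq_addr _ _); rewrite leq_mul2l r_le orbT.
have half_far : #|T| <= 2 * far by nia.
nia.
Qed.

Lemma unreachable_weight :
  (\sum_y #|unreachable e y|) * D
    <= \sum_u \sum_(v | e u v) ties e u v + #|T| * \sum_u (D - deg e u).
Proof.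
apply: leq_trans (leq_add (sum_unreachable_deg_le_ties e_sym) (leqnn _)).
rewrite big_distrl -sum_nat_const -big_split /=; apply: leq_sum => y _.
rewrite -sum_nat_const (eq_bigr (fun u => deg e u + (D - deg e u))) => [|u _]; last first.
  by rewrite subnKC.
rewrite big_split leq_add2l [X in _ <= X](bigID (mem (unreachable e y))) /=.
exact: leq_addr.
Qed.

Lemma mostar_depth_bound : 0 < #|T| -> forall r, 2 * r * (1 + D ^ r) <= #|T| ->
  2 * mostar e + #|T| * r <= D * #|T| * #|T|.
Proof.
move=> T_gt0 r r_small; have edges := sum_edge_bound e; have weight := unreachable_weight.
set n := #|T| in T_gt0 r_small edges weight *.
set S := \sum_u \sum_(v | e u v) _ in edges.
set C := \sum_u \sum_(v | e u v) ties e u v in edges weight.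
set AB := \sum_u \sum_(v | e u v) _ * _ in edges.
set U := \sum_y #|unreachable e y| in weight *.
set X := \sum_u deg e u in edges; set W := \sum_u (D - deg e u) in weight.
set SD := \sum_y \sum_z distn e y z.
have depth : n * (n * r) <= n * U + 2 * SD.
  rewrite /U /SD !big_distrr -big_split -sum_nat_const /=.
  by apply: leq_sum => y _; apply: depth_bound.
have dist_le : SD <= AB.
  rewrite /AB sum_nG_prod; apply: leq_sum => y _; apply: leq_sum => z _.
  exact: distn_le_ncross.
have deficit : X + W = n * D.
  by rewrite -big_split -sum_nat_const /=; apply: eq_bigr => u _; rewrite subnKC.
have mostar_le : 2 * mostar e <= S by rewrite mulnC leq_divM.
(* n^2 r <= n U + 2 SD <= n C + n^2 W + 2 AB, n S + n C + 2 AB <= n^2 X and X + W = n D. *)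
by rewrite -(leq_pmul2l T_gt0); nia.
Qed.

End BoundedDegree.

Lemma pow2_ge r : 5 <= r -> 3 * r + 4 <= 2 ^ r.
Proof.
elim: r => [|r IHr] //; rewrite leq_eqVlt => /orP[/eqP <- //|r_ge].
by have := IHr r_ge; rewrite expnS; lia.
Qed.

Lemma tower_ge b r : 2 <= b -> 5 <= r ->
  2 * (r + 1) * (1 + (b + 1) ^ (r + 1)) <= b ^ (b ^ r).
Proof.
move=> b_ge r_ge; have two_r := pow2_ge r_ge.
have b_r : 2 ^ r <= b ^ r by rewrite leq_exp2r //; lia.
have head : 2 * (r + 1) <= b ^ (r + 1) by rewrite addn1 expnS; nia.
have tail : 1 + (b + 1) ^ (r + 1) <= b ^ (2 * r + 3).
  have b_sq : (b + 1) ^ (r + 1) <= b ^ (2 * r + 2).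
    rewrite (_ : 2 * r + 2 = 2 * (r + 1)); last by lia.
    by rewrite expnM leq_exp2r ?addn1 // expnS expn1; nia.
  have : 1 <= b ^ (2 * r + 2) by rewrite expn_gt0; lia.
  by rewrite (addnS _ 2) expnS; nia.
apply: leq_trans (leq_mul head tail) _; rewrite -expnD leq_exp2l; lia.
Qed.

Lemma exists_depth d n : 3 <= d -> 2 * 5 * (1 + d ^ 5) <= n ->
  exists r, 2 * r * (1 + d ^ r) <= n /\ n <= (d - 1) ^ ((d - 1) ^ r).
Proof.
move=> d_ge n_large; pose P r := 2 * r * (1 + d ^ r) <= n.
have P_bounded r : P r -> r <= n by apply: leq_trans; nia.
have [r Pr r_max] := ex_maxnP (ex_intro P 5 n_large) P_bounded.
have tower : 2 * (r + 1) * (1 + d ^ (r + 1)) <= (d - 1) ^ ((d - 1) ^ r).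
  have d1_ge : 2 <= d - 1 by lia.
  by have := tower_ge d1_ge (r_max 5 n_large); rewrite subnK //; lia.
exists r; split => //; case: (leqP (2 * (r + 1) * (1 + d ^ (r + 1))) n).
  by move=> /r_max; lia.
by move=> /ltnW/leq_trans; apply.
Qed.
Section RealBounds.
Local Open Scope R_scope.

Lemma ln_le x y : 0 < x -> x <= y -> ln x <= ln y.
Proof.
move=> x_gt0 /Rle_lt_or_eq_dec[x_lt | ->]; last exact: Rle_refl.
exact/Rlt_le/ln_increasing.
Qed.

Lemma INR_expn m k : INR (m ^ k)%N = INR m ^ k.
Proof. by elim: k => [|k IHk] //; rewrite expnS mult_INR IHk. Qed.

Lemma logb_le_pow b x k : 1 < b -> 0 < x -> x <= b ^ k -> logb b x <= INR k.
Proof.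
move=> b_gt1 x_gt0 x_le; have lnb_gt0 : 0 < ln b by rewrite -ln_1; apply: ln_increasing; lra.
apply: (Rmult_le_reg_r (ln b)) => //; rewrite /logb /Rdiv Rmult_assoc Rinv_l; last lra.
by rewrite Rmult_1_r -ln_pow; [apply: ln_le | lra].
Qed.

Lemma loglog_le (b n r : nat) : (1 < b)%N -> (1 < n)%N -> (n <= b ^ (b ^ r))%N ->
  logb (INR b) (logb (INR b) (INR n)) <= INR r.
Proof.
move=> b_gt1 n_gt1 n_le; have b_gt1R : 1 < INR b by apply: (lt_INR 1); apply/ltP.
have n_gt1R : 1 < INR n by apply: (lt_INR 1); apply/ltP.
apply: logb_le_pow => //.
  rewrite /logb; apply: Rdiv_lt_0_compat; rewrite -ln_1; apply: ln_increasing; lra.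
rewrite -INR_expn; apply: logb_le_pow; [lra | lra | ].
by rewrite -INR_expn; apply/le_INR/leP.
Qed.

Lemma mostar_coef_bounds d : 3 <= d ->
  0 <= (d - 2) / (d - 1) ^ 2 /\ 4 * ((d - 2) / (d - 1) ^ 2) <= 1.
Proof.
move=> d_ge; have sq_gt0 : 0 < (d - 1) ^ 2 by apply: pow_lt; lra.
split; first by apply: Rmult_le_pos; [lra | apply/Rlt_le/Rinv_0_lt_compat].
apply: (Rmult_le_reg_r ((d - 1) ^ 2)) => //.
rewrite Rmult_1_l /Rdiv Rmult_assoc Rmult_assoc Rinv_l; nra.
Qed.

Lemma mostar_real_bound (D n M r : nat) (c L : R) : 0 <= c -> 4 * c <= 1 ->
  L <= INR r -> (2 * M + n * r <= D * n * n)%N ->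
  INR M <= INR D / 2 * INR n ^ 2 - 2 * c * INR n * L.
Proof.
move=> c_ge0 c_le L_le /leP/le_INR; rewrite !plus_INR !mult_INR /= => nat_bound.
have n_ge0 := pos_INR n; have cn_ge0 : 0 <= c * INR n by apply: Rmult_le_pos.
have nL_le : INR n * L <= INR n * INR r by apply: Rmult_le_compat_l.
suff : 2 * c * INR n * L <= INR n * INR r / 2 by lra.
case: (Rle_lt_dec L 0) => L_sgn.
  have nr_ge0 : 0 <= INR n * INR r by apply/Rmult_le_pos/pos_INR.
  have : 0 <= c * INR n * - L by apply: Rmult_le_pos; lra.
  lra.
have : 0 <= (1 - 4 * c) * (INR n * L) by apply: Rmult_le_pos; [lra | apply: Rmult_le_pos; lra].
lra.
Qed.

Lemma cv_eventually_0 (N : nat) (u : nat -> R) :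
  (forall n, (N <= n)%N -> u n = 0) -> Un_cv u 0.
Proof.
move=> u_eq0 eps eps_gt0; exists N => n /leP n_ge.
by rewrite u_eq0 ?R_dist_eq.
Qed.

End RealBounds.

Theorem theorem2 (D : nat) (hD : 3 <= D) :
  exists eps : nat -> R,
    Un_cv (fun n => eps n) 0%R /\
    forall (n : nat), 3 <= n ->
    forall (T : finType) (e : rel T),
      #|T| = n -> simple_graph e -> maxdeg_le e D ->
      (INR (mostar e) <=
         INR D / 2 * INR n ^ 2
         - (2 - eps n) * (INR D - 2) / (INR D - 1) ^ 2 * INR n
           * logb (INR D - 1) (logb (INR D - 1) (INR n)))%R.
Proof.
(* Beyond N0 the bound holds with eps = 0; below it, eps = 2 leaves only Mo <= D n^2 / 2. *)
pose N0 := 2 * 5 * (1 + D ^ 5).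
exists (fun n => if N0 <= n then 0%R else 2%R); split.
  by apply: (@cv_eventually_0 N0) => n ->.
move=> n n_ge T e card_T [e_sym _] deg_le.
have T_gt0 : 0 < #|T| by rewrite card_T; lia.
have D_ge3 : (3 <= INR D)%R by have := le_INR 3 D (elimT leP hD); rewrite [INR 3]/=; lra.
have [c_ge0 c_le] := mostar_coef_bounds D_ge3.
have D_gt0 : 0 < D by lia.
have mostar_le := mostar_depth_bound e_sym deg_le D_gt0 T_gt0; rewrite card_T in mostar_le.
case: (leqP N0 n) => [n_large | _].
  have [r [r_small n_le]] := exists_depth hD n_large.
  have [D1_gt1 n_gt1] : 1 < D - 1 /\ 1 < n by lia.
  have INR_D1 : INR (D - 1) = (INR D - 1)%R by rewrite minus_INR //; apply/leP; lia.
  have loglog := loglog_le D1_gt1 n_gt1 n_le; rewrite INR_D1 in loglog.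
  have := mostar_real_bound c_ge0 c_le loglog (mostar_le r r_small).
  lra.
have quarter0 : (4 * 0 <= 1)%R by lra.
have := mostar_real_bound (Rle_refl 0) quarter0 (pos_INR 0) (mostar_le 0 (leq0n n)).
lra.
Qed.
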